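(* Let $p$ be an odd prime, $m\ge1$ and $n\ge 2$ integers such that $p$ divides $|\mathrm{GL}_m(\mathbb{Z}/2\mathbb{Z})|$. Let $P\in\mathrm{GL}_m(\mathbb{Z}/2\mathbb{Z})$ have order $p$, and let $E\in\mathrm{GL}_n(\mathbb{Z}/p\mathbb{Z})$ be a non-identity diagonal matrix with diagonal entries $(1,\epsilon_2,\dots,\epsilon_n)$, $\epsilon_i\in\{-1,1\}$. On $A = (\mathbb{Z}/2\mathbb{Z})^m\times(\mathbb{Z}/p\mathbb{Z})^n$ (column vectors) define \[ (u,v)\cdot(x,y) = (u + P^{v_1}x,\ v+y),\qquad (u,v)\circ(x,y) = (u+x,\ v + E^{u_1}y), \] where $u=(u_1,\dots,u_m)^T$, $v=(v_1,\dots,v_n)^T$. Then $(A,\cdot,\circ)$ is a skew brace, and if there exists $w\in\mathbb{Z}/p\mathbb{Z}$ such that $P^{w}-I_m$ has a non-zero entry in its first row, then $A$ is not meta-trivial.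
   Context: A skew brace is a set $A$ with two group operations $\cdot$ and $\circ$ such that $a\circ(b\cdot c) = (a\circ b)\cdot a^{-1}\cdot(a\circ c)$ for all $a,b,c$, where $a^{-1}$ is the inverse in $(A,\cdot)$. Define $a*b = a^{-1}\cdot(a\circ b)\cdot b^{-1}$ and let $A'$ be the subgroup of $(A,\cdot)$ generated by all $a*b$. $A$ is meta-trivial if $x\circ y = x\cdot y$ for all $x,y\in A'$. *)

From HB Require Import structures.
From mathcomp Require Import all_boot all_order all_algebra all_fingroup.
Set Implicit Arguments. Unset Strict Implicit. Unset Printing Implicit Defensive.
Import GRing.Theory.
Local Open Scope ring_scope.

Definition group_axioms (T : Type) (op : T -> T -> T) (e : T) (inv : T -> T) :=
  [/\ forall x y z, op x (op y z) = op (op x y) z,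
      forall x, op e x = x /\ op x e = x &
      forall x, op x (inv x) = e /\ op (inv x) x = e].

Definition skew_brace (T : Type) (dot circ : T -> T -> T) : Prop :=
  exists (e : T) (inv : T -> T),
    [/\ group_axioms dot e inv,
        (exists (e' : T) (inv' : T -> T), group_axioms circ e' inv') &
        forall a b c, circ a (dot b c) = dot (dot (circ a b) (inv a)) (circ a c)].

Definition sb_star (T : Type) (dot circ : T -> T -> T) (inv : T -> T) (a b : T) : T :=
  dot (dot (inv a) (circ a b)) (inv b).

Inductive in_Aprime (T : Type) (dot circ : T -> T -> T) (e : T) (inv : T -> T)
  : T -> Prop :=
| Ap_gen a b : in_Aprime dot circ e inv (sb_star dot circ inv a b)
| Ap_one : in_Aprime dot circ e inv e
| Ap_mul x y : in_Aprime dot circ e inv x -> in_Aprime dot circ e inv y ->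
               in_Aprime dot circ e inv (dot x y)
| Ap_inv x : in_Aprime dot circ e inv x -> in_Aprime dot circ e inv (inv x).

(** Meta-trivial: x o y = x . y for all x, y in A'.  (The identity and inverse
    of a group law are unique, so quantifying over them is harmless.) *)
Definition meta_trivial (T : Type) (dot circ : T -> T -> T) : Prop :=
  forall (e : T) (inv : T -> T), group_axioms dot e inv ->
    forall x y, in_Aprime dot circ e inv x -> in_Aprime dot circ e inv y ->
      circ x y = dot x y.

(** First coordinate of a column vector (meaningful for n >= 1). *)
Definition coord1 (R : nmodType) (n : nat) (v : 'cV[R]_n) : R :=
  \sum_(i < n | val i == 0%N) v i 0.

Definition brace_dot (p m n : nat) (P : 'M['F_2]_m)
  (a b : 'cV['F_2]_m * 'cV['F_p]_n) : 'cV['F_2]_m * 'cV['F_p]_n :=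
  (a.1 + P ^+ (nat_of_ord (coord1 a.2)) *m b.1, a.2 + b.2).

Definition brace_circ (p m n : nat) (E : 'M['F_p]_n)
  (a b : 'cV['F_2]_m * 'cV['F_p]_n) : 'cV['F_2]_m * 'cV['F_p]_n :=
  (a.1 + b.1, a.2 + E ^+ (nat_of_ord (coord1 a.1)) *m b.2).

From HB Require Import structures.
From mathcomp Require Import all_boot all_order all_algebra all_fingroup.
Import GRing.Theory.
Set Implicit Arguments. Unset Strict Implicit. Unset Printing Implicit Defensive.
Local Open Scope ring_scope.

(* Write c(x) for the first coordinate of a column vector x.  The two laws
     (u,v).(x,y) = (u + P^c(v) x, v + y),   (u,v)o(x,y) = (u + x, v + E^c(u) y)
   are semidirect-product-like group laws as soon as P^p = 1 and E^2 = 1,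
   because then k |-> P^k (resp. k |-> E^k) is a homomorphism out of Z/p
   (resp. Z/2).  The brace compatibility only needs, in addition, that E fixes
   the first coordinate, c(E^k y) = c(y), which holds for the diagonal matrix
   E = diag(1, e_2, ..., e_n).

   For non-meta-triviality we compute two generators of A':
     (0, -w) * (e_j, 0) = ((P^w + 1) e_j, 0)   and   (e_1, 0) * (0, e_k) = (0, E e_k - e_k)
   with e_k an eigenvector of E for -1.  The hypothesis on P^w - 1 makes the
   first of them act by E under o, so meta-triviality would force
   E (E e_k - e_k) = E e_k - e_k, i.e. 4 = 0 in Z/p, impossible for p odd. *)

Lemma F2_addxx (r c : nat) (u : 'M['F_2]_(r, c)) : u + u = 0.
Proof.
by apply/matrixP => i j; rewrite !mxE; apply: (addrr_pchar2 (pchar_Fp (isT : prime 2))).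
Qed.

Lemma F2_oppr (r c : nat) (u : 'M['F_2]_(r, c)) : - u = u.
Proof. by rewrite -[LHS]add0r -(F2_addxx u) addrK. Qed.

Lemma F2_nz (z : 'F_2) : z != 0 -> z = 1.
Proof. by case: z => [[|[|q]] hq] //= _; apply/val_inj. Qed.

Lemma Fp_four_neq0 (p : nat) : prime p -> odd p -> (4%:R : 'F_p) != 0.
Proof.
move=> hp hodd; rewrite -(dvdn_pcharf (pchar_Fp hp)); apply/negP => h4.
have := @dvdn_leq p 4 isT h4; move: hp hodd h4; by case: p => [|[|[|[|[|q]]]]].
Qed.

(** If M^p = 1, then the exponentiation k |-> M^k is a morphism from the
    additive group of Z/p: this is what makes both laws associative. *)
Lemma expr_FpD (p : nat) (R : pzRingType) (M : R) (a b : 'F_p) :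
  prime p -> M ^+ p = 1 -> M ^+ (a + b)%R = M ^+ a * M ^+ b.
Proof.
move=> hp hM; rewrite -exprD [in RHS](divn_eq (a + b) p) exprD mulnC exprM hM expr1n mul1r.
by congr (M ^+ (_ %% _)); apply: Fp_cast.
Qed.

Lemma coord1D (R : nmodType) (n : nat) (u v : 'cV[R]_n) :
  coord1 (u + v) = coord1 u + coord1 v.
Proof. by rewrite /coord1 -big_split; apply: eq_bigr => i _; rewrite mxE. Qed.

Lemma coord1N (R : zmodType) (n : nat) (v : 'cV[R]_n) : coord1 (- v) = - coord1 v.
Proof. by rewrite /coord1 -sumrN; apply: eq_bigr => i _; rewrite mxE. Qed.

Lemma coord10 (R : nmodType) (n : nat) : coord1 (0 : 'cV[R]_n) = 0.
Proof. by rewrite /coord1 big1 // => i _; rewrite mxE. Qed.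

Lemma coord1E (R : nmodType) (n : nat) (i0 : 'I_n) (v : 'cV[R]_n) :
  val i0 = 0%N -> coord1 v = v i0 0.
Proof. by move=> h; rewrite /coord1 (big_pred1 i0) // => i /=; rewrite -(inj_eq val_inj) h. Qed.

Lemma coord1_diag (R : pzRingType) (n : nat) (d : 'rV[R]_n) (y : 'cV[R]_n) (k : nat) :
  (forall i : 'I_n, val i = 0%N -> d 0 i = 1) -> coord1 (diag_mx d ^+ k *m y) = coord1 y.
Proof.
move=> hd; elim: k => [|k IH]; first by rewrite expr0 mul1mx.
rewrite exprS -mulmxE -mulmxA -IH /coord1 mul_diag_mx.
by apply: eq_bigr => i /eqP h; rewrite mxE hd // mul1r.
Qed.

Lemma diag_pm1_sqr (R : pzRingType) (n : nat) (d : 'rV[R]_n) :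
  (forall i : 'I_n, d 0 i = 1 \/ d 0 i = -1) -> diag_mx d ^+ 2 = 1.
Proof.
move=> h; rewrite expr2 -mulmxE mulmx_diag; apply/matrixP => i j; rewrite !mxE.
by case: (h i) => ->; rewrite ?mulrNN mulr1.
Qed.

Lemma diag_pm1_neg (R : pzRingType) (n : nat) (d : 'rV[R]_n) :
  (forall i : 'I_n, d 0 i = 1 \/ d 0 i = -1) -> diag_mx d != 1%:M ->
  exists k : 'I_n, d 0 k = -1.
Proof.
move=> hpm hne; have [/existsP [k /eqP hk]|hall] := boolP [exists k, d 0 k == -1].
  by exists k.
case/negP: hne; apply/eqP/matrixP => a b; rewrite !mxE.
by case: (hpm a) => [->//|h]; move: hall => /existsPn /(_ a); rewrite h eqxx.
Qed.

(** An eigenvector e_k of a diagonal matrix for the eigenvalue -1 is moved by it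
    to E e_k - e_k = -2 e_k, which is again moved unless 4 = 0. *)
Lemma diag_neg_moves (R : pzRingType) (n : nat) (d : 'rV[R]_n) (k : 'I_n) :
  d 0 k = -1 -> (4%:R : R) != 0 ->
  diag_mx d *m (diag_mx d *m (delta_mx k 0 : 'cV[R]_n) - delta_mx k 0)
    != diag_mx d *m delta_mx k 0 - delta_mx k 0.
Proof.
move=> hk h4; apply: contra h4 => /eqP /(congr1 (fun y : 'cV[R]_n => y k 0)).
rewrite mulmxBr !mul_diag_mx !mxE hk !eqxx /= !mulr1 !mulN1r opprK -opprD.
by move/eqP; rewrite -addr_eq0 -(natrD _ 2 2).
Qed.

Lemma not_meta_trivial_of_stars (T : Type) (dot circ : T -> T -> T) (e : T)
    (inv : T -> T) (a b c d : T) :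
  group_axioms dot e inv ->
  circ (sb_star dot circ inv a b) (sb_star dot circ inv c d)
    <> dot (sb_star dot circ inv a b) (sb_star dot circ inv c d) ->
  ~ meta_trivial dot circ.
Proof.
move=> hgrp hne MT; apply: hne.
by apply: (MT e inv hgrp); apply: Ap_gen.
Qed.

Section ConcreteBrace.

Variables (p m n : nat) (P : 'M['F_2]_m) (E : 'M['F_p]_n).
Hypothesis p_prime : prime p.
Hypothesis P_order : P ^+ p = 1.
Hypothesis E_invol : E ^+ 2 = 1.
Hypothesis E_coord1 : forall (k : nat) (y : 'cV['F_p]_n), coord1 (E ^+ k *m y) = coord1 y.

Local Notation A := ('cV['F_2]_m * 'cV['F_p]_n)%type.
Local Notation dot := (@brace_dot p m n P).
Local Notation circ := (@brace_circ p m n E).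

Let PD (a b : 'F_p) : P ^+ (a + b)%R = P ^+ a *m P ^+ b.
Proof. by rewrite mulmxE; apply: expr_FpD. Qed.

Let ED (a b : 'F_2) : E ^+ (a + b)%R = E ^+ a *m E ^+ b.
Proof. by rewrite mulmxE; apply: expr_FpD. Qed.

Definition dot_inv (a : A) : A := (P ^+ (coord1 (- a.2)) *m a.1, - a.2).

Definition circ_inv (a : A) : A := (a.1, - (E ^+ (coord1 a.1) *m a.2)).

Lemma dot_group : group_axioms dot (0, 0) dot_inv.
Proof.
split.
- move=> [a1 a2] [b1 b2] [c1 c2]; rewrite /brace_dot /=; congr pair; last by rewrite addrA.
  by rewrite coord1D PD mulmxDr mulmxA addrA.
- by move=> [x1 x2]; rewrite /brace_dot /= coord10 expr0 mul1mx !add0r mulmx0 !addr0.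
- move=> [a1 a2]; rewrite /brace_dot /dot_inv /=; split; congr pair.
  + by rewrite mulmxA -PD coord1N subrr expr0 mul1mx F2_addxx.
  + by rewrite subrr.
  + by rewrite F2_addxx.
  + by rewrite addNr.
Qed.

Lemma circ_group : group_axioms circ (0, 0) circ_inv.
Proof.
split.
- move=> [a1 a2] [b1 b2] [c1 c2]; rewrite /brace_circ /=; congr pair; first by rewrite addrA.
  by rewrite coord1D ED mulmxDr mulmxA addrA.
- by move=> [x1 x2]; rewrite /brace_circ /= coord10 expr0 mul1mx !add0r mulmx0 !addr0.
- move=> [a1 a2]; rewrite /brace_circ /circ_inv /=; split; congr pair.
  + by rewrite F2_addxx.
  + by rewrite mulmxN mulmxA mulmxE -exprD addnn -mul2n exprM E_invol expr1n mul1mx subrr.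
  + by rewrite F2_addxx.
  + by rewrite addNr.
Qed.

(** The skew brace compatibility a o (b . c) = (a o b) . a^-1 . (a o c);
    it uses that E does not move the coordinate c which drives P. *)
Lemma brace_compat (a b c : A) :
  circ a (dot b c) = dot (dot (circ a b) (dot_inv a)) (circ a c).
Proof.
case: a b c => [a1 a2] [b1 b2] [c1 c2]; rewrite /brace_dot /brace_circ /dot_inv /=.
rewrite !coord1D coord1N E_coord1 (addrC (coord1 a2)) addrK mulmxA -PD addrK.
congr pair; last by rewrite mulmxDr [a2 + _ - a2]addrAC subrr add0r addrCA.
by rewrite mulmxDr !addrA; congr (_ + _); rewrite -addrA F2_addxx addr0.
Qed.

Lemma concrete_skew_brace : skew_brace dot circ.
Proof.
exists (0, 0), dot_inv; split; [exact: dot_group | | exact: brace_compat].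
by exists (0, 0), circ_inv; apply: circ_group.
Qed.

Lemma star_vert_horiz (v : 'cV['F_p]_n) (x : 'cV['F_2]_m) :
  sb_star dot circ dot_inv (0, v) (x, 0) = ((P ^+ (coord1 (- v)) + 1) *m x, 0).
Proof.
rewrite /sb_star /brace_dot /brace_circ /dot_inv /=.
rewrite !mulmx0 !oppr0 coord10 expr0 !mul1mx !addr0 !add0r addNr coord10 expr0.
by rewrite mul1mx mulmxDl mul1mx.
Qed.

Lemma star_horiz_vert (u : 'cV['F_2]_m) (y : 'cV['F_p]_n) :
  coord1 u = 1 -> sb_star dot circ dot_inv (u, 0) (0, y) = (0, E *m y - y).
Proof.
move=> cu; rewrite /sb_star /brace_dot /brace_circ /dot_inv /=.
by rewrite !oppr0 !add0r !addr0 coord10 expr0 !mul1mx !mulmx0 addr0 F2_addxx cu expr1.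
Qed.

End ConcreteBrace.

Theorem proposition9p4 (p m n : nat)
  (hp : prime p) (hodd : odd p) (hm : (1 <= m)%N) (hn : (2 <= n)%N)
  (hdiv : (p %| #|[set M : 'M['F_2]_m | M \in unitmx]|)%N)
  (P : 'M['F_2]_m) (hPunit : P \in unitmx)
  (hPord : P ^+ p = 1%:M /\ (forall k : nat, (0 < k < p)%N -> P ^+ k != 1%:M))
  (d : 'rV['F_p]_n) (hd1 : forall i : 'I_n, val i = 0%N -> d 0 i = 1)
  (hdpm : forall i : 'I_n, d 0 i = 1 \/ d 0 i = -1)
  (hEne : diag_mx d != 1%:M) :
  skew_brace (@brace_dot p m n P) (@brace_circ p m n (diag_mx d)) /\
  ((exists (w : 'F_p) (j : 'I_m),
      exists i : 'I_m, val i = 0%N /\ (P ^+ (nat_of_ord w) - 1%:M) i j != 0) ->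
   ~ meta_trivial (@brace_dot p m n P) (@brace_circ p m n (diag_mx d))).
Proof.
have [hP _] := hPord.
have hE := diag_pm1_sqr hdpm.
have hEc k y := coord1_diag y k hd1.
split; first exact: concrete_skew_brace.
move=> [w [j [i [hi0 hij]]]]; have [k hk] := diag_pm1_neg hdpm hEne.
apply: (not_meta_trivial_of_stars (a := (0, - const_mx w)) (b := (delta_mx j 0, 0))
  (c := (delta_mx i 0, 0)) (d := (0, delta_mx k 0)) (dot_group n hp hP)).
have ce_i : coord1 (delta_mx i 0 : 'cV['F_2]_m) = 1 by rewrite (coord1E _ hi0) mxE !eqxx.
(* The first witness ((P^w + 1) e_j, 0) has first coordinate 1, so it acts by E. *)
have cX : coord1 ((P ^+ w + 1) *m delta_mx j 0) = 1.
  rewrite (coord1E _ hi0) -colE mxE; apply: F2_nz.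
  by move: hij; rewrite F2_oppr.
have c_w : coord1 (const_mx w : 'cV['F_p]_n) = w.
  by rewrite (@coord1E _ _ (Ordinal (ltnW hn))) ?mxE.
rewrite star_vert_horiz star_horiz_vert // opprK c_w /brace_dot /brace_circ.
move=> /(congr1 snd) /=; rewrite cX expr1 !add0r; apply/eqP.
exact: diag_neg_moves hk (Fp_four_neq0 hp hodd).
Qed.
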